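(* Let $L\ge K>0$, $m\ge 1$, $d\ge 1$. For an $L$-layer MinAgg GNN $\mathcal A_\theta$ with hidden dimension $d$ and $m$-layer aggregation and update MLPs, there is an assignment of the parameters $\theta$ with exactly $mL+mK+K$ nonzero entries (all biases zero) such that $\mathcal A_\theta(G)=\Gamma^K(G)$ for every $G\in\mathscr G$, i.e. $h^{(L)}_v(G)=x_v(\Gamma^K(G))$ for all $v\in V(G)$.
   Context: Attributed graphs: $G=(V,E,X_{\mathrm v},X_{\mathrm e})$ with $V$ finite, $E$ a set of undirected edges, nonnegative edge weights $x_{(u,v)}=x_{(v,u)}\ge 0$ and nonnegative real node features $x_v$. Every node carries a self-loop of weight $x_{(v,v)}=0$, and $\mathcal N(v)=\{v\}\cup\{u:\{u,v\}\in E\}$. A constant $\beta>0$ is fixed; $\mathscr G$ is the set of attributed graphs with $\sum_{e\in E}x_e<\beta$. $x_v(H)$ is the feature of $v$ in $H$. The Bellman–Ford operator $\Gamma$ sends $G$ to the graph with the same vertices, edges and edge weights and node features $x'_v=\min\{x_u+x_{(u,v)}:u\in\mathcal N(v)\}$; $\Gamma^K$ is its $K$-fold iterate. An $m$-layer ReLU MLP $f:\mathbb R^{n_0}\to\mathbb R^{n_m}$ has parameters $W_j\in\mathbb R^{n_j\times n_{j-1}}$, $b_j\in\mathbb R^{n_j}$ ($j\in[m]$) and computes $x^{(0)}=x$, $x^{(j)}=\sigma(W_jx^{(j-1)}+b_j)$, $f(x)=x^{(m)}$, where $\sigma$ is componentwise ReLU. MinAgg GNN: an $L$-layer MinAgg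 GNN $\mathcal A_\theta$ with hidden dimension $d$ and $m$-layer MLPs consists, for each $\ell\in[L]$, of $m$-layer ReLU MLPs $f^{\mathrm{agg},(\ell)}:\mathbb R^{d_{\ell-1}+1}\to\mathbb R^d$ and $f^{\mathrm{up},(\ell)}:\mathbb R^{d+d_{\ell-1}}\to\mathbb R^{d_\ell}$ (internal widths $d$), where $d_0=d_L=1$ and $d_\ell=d$ for $0<\ell<L$. On input $G$: $h^{(0)}_v=x_v$ and $$h^{(\ell)}_v=f^{\mathrm{up},(\ell)}\Big(\min_{u\in\mathcal N(v)}f^{\mathrm{agg},(\ell)}\big(h^{(\ell-1)}_u\oplus x_{(u,v)}\big)\oplus h^{(\ell-1)}_v\Big),$$ with $\min$ taken coordinatewise and $\oplus$ concatenation. The output $\mathcal A_\theta(G)$ is $G$ with node features replaced by $h^{(L)}_v$. $\theta$ is the collection of all weight and bias entries of all these MLPs. *)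

From mathcomp Require Import all_boot all_order all_algebra.
From mathcomp Require Import reals.
Set Implicit Arguments. Unset Strict Implicit. Unset Printing Implicit Defensive.
Import Order.TTheory GRing.Theory Num.Theory.
Local Open Scope ring_scope.

Section Defs.
Variable R : realType.

(* Vectors of R^n are represented as functions [nat -> R]; only the
   coordinates [i < n] are ever read. *)

Definition relu (t : R) : R := Num.max t 0.

Definition vconcat (a : nat) (x y : nat -> R) : nat -> R :=
  fun i => if (i < a)%N then x i else y (i - a)%N.

(* An m-layer ReLU MLP with widths n 0, ..., n m, weights W j (j = 1..m),
   W j i k the (i,k) entry of W_j in R^{n_j x n_{j-1}}, biases b j i. *)
Fixpoint mlp_layers (n : nat -> nat) (W : nat -> nat -> nat -> R)
  (b : nat -> nat -> R) (j : nat) (x : nat -> R) : nat -> R :=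
  match j with
  | 0 => x
  | j'.+1 => fun i =>
      relu (\sum_(k < n j') W j'.+1 i k * mlp_layers n W b j' x k + b j'.+1 i)
  end.

Definition mlp (m : nat) (n : nat -> nat) W b x := @mlp_layers n W b m x.

Definition mlp_nnz (m : nat) (n : nat -> nat) (W : nat -> nat -> nat -> R)
  (b : nat -> nat -> R) : nat :=
  (\sum_(1 <= j < m.+1)
     ((\sum_(i < n j) \sum_(k < n j.-1) (W j i k != 0%R))
      + \sum_(i < n j) (b j i != 0%R)))%N.

(* Parameters theta of a MinAgg GNN: for each layer l (1..L), the weights
   and biases of f^{agg,(l)} and f^{up,(l)}. *)
Record gnn_params := GnnParams {
  Wagg : nat -> nat -> nat -> nat -> R;  (* l j i k *)
  bagg : nat -> nat -> nat -> R;
  Wup  : nat -> nat -> nat -> nat -> R;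
  bup  : nat -> nat -> nat -> R }.

Definition dim_l (L d l : nat) : nat :=
  if (l == 0)%N || (l == L) then 1%N else d.

Definition agg_widths (L m d l : nat) : nat -> nat :=
  fun j => if j == 0%N then (dim_l L d l.-1 + 1)%N else d.

Definition up_widths (L m d l : nat) : nat -> nat :=
  fun j => if j == 0%N then (d + dim_l L d l.-1)%N
           else if j == m then dim_l L d l else d.

Definition gnn_nnz (L m d : nat) (th : gnn_params) : nat :=
  (\sum_(1 <= l < L.+1)
     (mlp_nnz m (agg_widths L m d l) (Wagg th l) (bagg th l)
      + mlp_nnz m (up_widths L m d l) (Wup th l) (bup th l)))%N.

Definition gnn_biases_zero (th : gnn_params) : Prop :=
  (forall l j i, bagg th l j i = 0) /\ (forall l j i, bup th l j i = 0).

(* Every node carries a self-loop of weight 0: edge weight used inside the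
   neighbourhood N(v) = {v} U {u | adj u v}. *)
Definition attributed_graph (V : finType) (adj : rel V) (w : V -> V -> R)
  (x : V -> R) : Prop :=
  (forall u v, adj u v = adj v u) /\ (forall v, ~~ adj v v) /\
  (forall u v, adj u v -> w u v = w v u) /\
  (forall u v, adj u v -> 0 <= w u v) /\ (forall v, 0 <= x v).

Definition ewt (V : finType) (w : V -> V -> R) (u v : V) : R :=
  if u == v then 0 else w u v.

(* sum over the (undirected) edges of their weights: each edge {u,v} appears
   twice in the ordered double sum *)
Definition total_edge_weight (V : finType) (adj : rel V) (w : V -> V -> R) : R :=
  (\sum_(u : V) \sum_(v : V | adj u v) w u v) / 2.

Definition nbhd_min (V : finType) (adj : rel V) (v : V) (g : V -> R) : R :=
  \big[Num.min/g v]_(u : V | adj u v) g u.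

Definition bellman_ford (V : finType) (adj : rel V) (w : V -> V -> R)
  (x : V -> R) : V -> R :=
  fun v => nbhd_min adj v (fun u => x u + ewt w u v).

Fixpoint gnn_h (L m d : nat) (th : gnn_params) (V : finType) (adj : rel V)
  (w : V -> V -> R) (x : V -> R) (l : nat) : V -> nat -> R :=
  match l with
  | 0 => fun v _ => x v
  | l'.+1 =>
      let h := gnn_h L m d th adj w x l' in
      let dprev := dim_l L d l' in
      fun v =>
        let agg u := mlp m (agg_widths L m d l'.+1) (Wagg th l'.+1) (bagg th l'.+1)
                       (vconcat dprev (h u) (fun _ => ewt w u v)) in
        let mn := fun i => nbhd_min adj v (fun u => agg u i) in
        mlp m (up_widths L m d l'.+1) (Wup th l'.+1) (bup th l'.+1)
            (vconcat d mn (h v))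
  end.

End Defs.

From mathcomp Require Import all_boot all_order all_algebra.
From mathcomp Require Import reals.
From mathcomp Require Import zify.
Set Implicit Arguments. Unset Strict Implicit. Unset Printing Implicit Defensive.
Import Order.TTheory GRing.Theory Num.Theory.
Local Open Scope ring_scope.

(* Each MLP gets a single nonzero row, a 0/1 vector, so that only output
   coordinate 0 is ever nonzero: the first layer sums the selected input
   coordinates and every later layer passes coordinate 0 on with one unit
   weight.  All values stay nonnegative, so the ReLUs act as the identity.
   In a layer l <= K the aggregation selects h_u and x_(u,v), and the update
   selects the minimum over N(v): one Bellman-Ford step.  In a layer l > K the
   aggregation is zero and the update copies h_v.  This costs (m + 1) + m
   weights per layer l <= K and m per layer l > K, i.e. mL + mK + K. *)

Lemma sum_ord_eq n a : (\sum_(k < n) (k == a :> nat) = (a < n))%N.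
Proof.
elim: n => [|n IH]; first by rewrite big_ord0.
rewrite big_ord_recr /= IH.
case: (ltngtP a n) => [a_lt_n|n_lt_a|->]; rewrite ltnS.
- by rewrite ltnW.
- by rewrite leqNgt n_lt_a.
- by rewrite leqnn.
Qed.

Lemma sum_ord_eq2 n a b : a != b ->
  (\sum_(k < n) ((k == a :> nat) || (k == b :> nat)) = (a < n) + (b < n))%N.
Proof.
move=> neq_ab; rewrite -!sum_ord_eq -big_split; apply: eq_bigr => k _ /=.
by case: (k == a :> nat) / eqP => [->|_]; rewrite ?(negbTE neq_ab) ?addn0.
Qed.

Lemma sum_ord_pred2 (M : nmodType) n a (F : nat -> M) : (0 < a < n)%N ->
  \sum_(k < n | (k == 0%N :> nat) || (k == a :> nat)) F k = F 0%N + F a.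
Proof.
case/andP=> a_gt0 a_lt_n; have n_gt0 := ltn_trans a_gt0 a_lt_n.
rewrite (bigD1 (Ordinal n_gt0)) //=; congr (_ + _).
rewrite (big_pred1 (Ordinal a_lt_n)) // => k /=.
rewrite -!val_eqE /=; have [->|_] := eqVneq (k : nat) a.
  by rewrite (gtn_eqF a_gt0).
by rewrite orbF andbN.
Qed.

Lemma sum_nat_leq L K : (K <= L)%N -> (\sum_(1 <= l < L.+1) (l <= K) = K)%N.
Proof.
move=> K_le_L; rewrite (@big_cat_nat _ _ _ K.+1) //= ?ltnS //.
rewrite [X in (_ + X)%N]big1_seq ?addn0 => [|l]; last first.
  by rewrite mem_index_iota => /andP[_ /andP[K_lt_l _]]; rewrite leqNgt K_lt_l.
rewrite (eq_big_nat _ _ (F2 := fun => 1%N)) => [|l /andP[_]]; last by rewrite ltnS => ->.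
by rewrite sum_nat_const_nat muln1 subn1.
Qed.

Section RowZeroMLP.
Variable R : realType.

Lemma relu_ge0 (t : R) : 0 <= relu t.
Proof. by rewrite /relu le_max lexx orbT. Qed.

Lemma relu_id (t : R) : 0 <= t -> relu t = t.
Proof. by move=> t_ge0; rewrite /relu max_l. Qed.

Lemma mlp_layersS n W b j (x : nat -> R) i :
  mlp_layers n W b j.+1 x i
  = relu (\sum_(k < n j) W j.+1 i k * mlp_layers n W b j x k + b j.+1 i).
Proof. by []. Qed.

Lemma mlp_ge0 m n W b (x : nat -> R) i : (1 <= m)%N -> 0 <= mlp m n W b x i.
Proof. by case: m => // m _; exact: relu_ge0. Qed.

Definition row0_weights (P : nat -> nat -> bool) : nat -> nat -> nat -> R :=
  fun j i k => ((i == 0%N) && P j k)%:R.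

Variables (n : nat -> nat) (P : nat -> nat -> bool).
Hypothesis n_gt0 : forall j, (0 < j)%N -> (0 < n j)%N.

Lemma mlp_nnz_row0 m :
  mlp_nnz m n (row0_weights P) (fun _ _ => 0)
  = (\sum_(1 <= j < m.+1) \sum_(k < n j.-1) P j k)%N.
Proof.
rewrite /mlp_nnz; apply: eq_big_nat => j /andP[j_gt0 _].
rewrite [X in (_ + X)%N]big1 ?addn0 => [|i _]; last by rewrite eqxx.
rewrite (bigD1 (Ordinal (n_gt0 j_gt0))) //= [X in (_ + X)%N]big1 ?addn0 => [|i i_neq0].
  by apply: eq_bigr => k _; rewrite /row0_weights pnatr_eq0 eqb0 negbK.
apply: big1 => k _; rewrite /row0_weights -val_eqE /= in i_neq0 *.
by rewrite (negbTE i_neq0) eqxx.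
Qed.

Hypothesis P_hidden : forall j, (2 <= j)%N -> P j =1 pred1 0%N.

Lemma mlp_nnz_row0_chain m : (1 <= m)%N ->
  mlp_nnz m n (row0_weights P) (fun _ _ => 0) = (\sum_(k < n 0) P 1%N k + m.-1)%N.
Proof.
move=> m_gt0; rewrite mlp_nnz_row0 big_ltn ?ltnS //.
rewrite (eq_big_nat _ _ (F2 := fun => 1%N)) ?sum_nat_const_nat ?muln1 ?subSS ?subn1 //.
move=> j /andP[j_ge2 _]; under eq_bigr do rewrite P_hidden //.
by rewrite sum_ord_eq n_gt0 //; lia.
Qed.

Lemma mlp_row0 m (x : nat -> R) : (1 <= m)%N ->
  mlp m n (row0_weights P) (fun _ _ => 0) x 0%N = relu (\sum_(k < n 0 | P 1%N k) x k).
Proof.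
rewrite /mlp; elim: m => [//|[|m] IH] _.
  rewrite mlp_layersS addr0 [in RHS]big_mkcond /=; congr relu; apply: eq_bigr => k _.
  by rewrite /row0_weights /=; case: (P 1%N k); rewrite ?mul1r ?mul0r.
have row0_hidden k : row0_weights P m.+2 0 k = (k == 0%N)%:R.
  by rewrite /row0_weights P_hidden.
rewrite mlp_layersS addr0; set f := mlp_layers _ _ _ m.+1 x.
rewrite (bigD1 (Ordinal (n_gt0 (ltn0Sn m)))) //= [X in _ + X]big1 ?addr0 => [|k]; last first.
  by rewrite -val_eqE row0_hidden => /negbTE ->; rewrite mul0r.
by rewrite row0_hidden mul1r /f IH // relu_id ?relu_ge0.
Qed.

End RowZeroMLP.

Section BellmanFord.
Variables (R : realType) (V : finType) (adj : rel V) (w : V -> V -> R).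

Lemma eq_nbhd_min v (g g' : V -> R) :
  g v = g' v -> (forall u, adj u v -> g u = g' u) -> nbhd_min adj v g = nbhd_min adj v g'.
Proof. by move=> eq_v eq_adj; rewrite /nbhd_min eq_v; apply: eq_bigr. Qed.

Lemma nbhd_min_ge0 v (g : V -> R) :
  0 <= g v -> (forall u, adj u v -> 0 <= g u) -> 0 <= nbhd_min adj v g.
Proof.
move=> g_v g_adj; apply: (big_ind (fun t : R => 0 <= t)) => // s t s_ge0 t_ge0.
by rewrite le_min s_ge0 t_ge0.
Qed.

Hypothesis w_ge0 : forall u v, adj u v -> 0 <= w u v.

Lemma ewt_ge0 u v : (u == v) || adj u v -> 0 <= ewt w u v.
Proof. by rewrite /ewt; case: eqP => //= _; exact: w_ge0. Qed.

Lemma iter_bellman_ford_ge0 k (x : V -> R) v :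
  (forall u, 0 <= x u) -> 0 <= iter k (bellman_ford adj w) x v.
Proof.
move=> x_ge0; elim: k v => [|k IH] v //=.
by apply: nbhd_min_ge0 => [|u adj_uv]; rewrite addr_ge0 ?IH ?ewt_ge0 ?eqxx ?adj_uv ?orbT.
Qed.

End BellmanFord.

Section BellmanFordGNN.
Variables (R : realType) (L K m d : nat).
Hypotheses (m_gt0 : (1 <= m)%N) (d_gt0 : (1 <= d)%N).

Lemma gnn_hS th (V : finType) (adj : rel V) (w : V -> V -> R) x l v :
  gnn_h L m d th adj w x l.+1 v
  = mlp m (up_widths L m d l.+1) (Wup th l.+1) (bup th l.+1)
      (vconcat d
         (fun i => nbhd_min adj v (fun u =>
            mlp m (agg_widths L m d l.+1) (Wagg th l.+1) (bagg th l.+1)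
              (vconcat (dim_l L d l) (gnn_h L m d th adj w x l u) (fun _ => ewt w u v)) i))
         (gnn_h L m d th adj w x l v)).
Proof. by []. Qed.

Lemma dim_l_gt0 l : (0 < dim_l L d l)%N.
Proof. by rewrite /dim_l; case: ifP. Qed.

Lemma agg_widths_gt0 l j : (0 < agg_widths L m d l j)%N.
Proof. by rewrite /agg_widths; case: ifP; rewrite ?addn1. Qed.

Lemma up_widths_gt0 l j : (0 < up_widths L m d l j)%N.
Proof.
rewrite /up_widths; case: ifP => _; first by rewrite ltn_addr.
by case: ifP => _ //; exact: dim_l_gt0.
Qed.

(* The input of f^{agg,(l)} is h_u (+) x_(u,v), whose coordinate d_(l-1) is
   the edge weight; the input of f^{up,(l)} is the minimum (+) h_v, whose
   coordinate d is h_v. *)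
Definition agg_sel (l j k : nat) : bool :=
  (l <= K)%N && (if j == 1%N then (k == 0%N) || (k == dim_l L d l.-1) else k == 0%N).

Definition up_sel (l j k : nat) : bool :=
  k == (if (j == 1%N) && (K < l)%N then d else 0%N).

Definition bf_params : gnn_params R :=
  GnnParams (fun l => row0_weights R (agg_sel l)) (fun _ _ _ => 0)
            (fun l => row0_weights R (up_sel l)) (fun _ _ _ => 0).

Lemma agg_nnz_bf_params l :
  mlp_nnz m (agg_widths L m d l) (Wagg bf_params l) (bagg bf_params l)
  = ((l <= K) * m.+1)%N.
Proof.
have widths_gt0 j (_ : (0 < j)%N) := agg_widths_gt0 l j.
case: (leqP l K) => [l_le_K | K_lt_l].
  rewrite (mlp_nnz_row0_chain R widths_gt0) //; last first.
    by move=> j j_ge2 k; rewrite /agg_sel l_le_K (gtn_eqF j_ge2).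
  rewrite /agg_sel l_le_K /agg_widths /= sum_ord_eq2; last by rewrite eq_sym -lt0n dim_l_gt0.
  have := dim_l_gt0 l.-1; lia.
rewrite mlp_nnz_row0 // big1 // => j _; apply: big1 => k _.
by rewrite /agg_sel leqNgt K_lt_l.
Qed.

Lemma up_nnz_bf_params l :
  mlp_nnz m (up_widths L m d l) (Wup bf_params l) (bup bf_params l) = m.
Proof.
have widths_gt0 j (_ : (0 < j)%N) := up_widths_gt0 l j.
rewrite (mlp_nnz_row0_chain R widths_gt0) //; last first.
  by move=> j j_ge2 k; rewrite /up_sel (gtn_eqF j_ge2).
rewrite /up_sel /= /up_widths /= sum_ord_eq.
have := dim_l_gt0 l.-1; case: (K < l)%N => /=; lia.
Qed.

Lemma gnn_nnz_bf_params : (K <= L)%N -> gnn_nnz L m d bf_params = (m * L + m * K + K)%N.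
Proof.
move=> K_le_L; rewrite /gnn_nnz.
under eq_big_nat => l _ do rewrite agg_nnz_bf_params up_nnz_bf_params.
rewrite big_split /= -big_distrl /= sum_nat_leq // sum_nat_const_nat subn1 /=; lia.
Qed.

Variables (V : finType) (adj : rel V) (w : V -> V -> R) (x : V -> R).

Lemma gnn_h_bf_params_succ l v :
  gnn_h L m d bf_params adj w x l.+1 v 0%N
  = if (l < K)%N then
      nbhd_min adj v (fun u => relu (gnn_h L m d bf_params adj w x l u 0%N + ewt w u v))
    else relu (gnn_h L m d bf_params adj w x l v 0%N).
Proof.
rewrite gnn_hS mlp_row0 //; last 2 first.
- by move=> j _; exact: up_widths_gt0.
- by move=> j j_ge2 k; rewrite /up_sel (gtn_eqF j_ge2).
case: ltnP => [l_lt_K | K_le_l]; last first.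
  have d_lt : (d < up_widths L m d l.+1 0)%N by have := dim_l_gt0 l; rewrite /up_widths /=; lia.
  rewrite (big_pred1 (Ordinal d_lt)) => [|k]; last by rewrite /up_sel ltnS K_le_l.
  by rewrite /vconcat /= ltnn subnn.
have agg_out u : mlp m (agg_widths L m d l.+1) (Wagg bf_params l.+1) (bagg bf_params l.+1)
    (vconcat (dim_l L d l) (gnn_h L m d bf_params adj w x l u) (fun _ => ewt w u v)) 0%N
  = relu (gnn_h L m d bf_params adj w x l u 0%N + ewt w u v).
  rewrite mlp_row0 //; last 2 first.
  - by move=> j _; exact: agg_widths_gt0.
  - by move=> j j_ge2 k; rewrite /agg_sel l_lt_K (gtn_eqF j_ge2).
  rewrite /agg_sel l_lt_K /= sum_ord_pred2; last by rewrite /agg_widths /= addn1 ltnSn dim_l_gt0.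
  by rewrite /vconcat dim_l_gt0 ltnn.
have zero_lt : (0 < up_widths L m d l.+1 0)%N by exact: up_widths_gt0.
rewrite (big_pred1 (Ordinal zero_lt)) => [|k]; last by rewrite /up_sel ltnNge l_lt_K.
rewrite /vconcat /= d_gt0 relu_id; last by apply: nbhd_min_ge0 => *; exact: mlp_ge0.
by apply: eq_nbhd_min => *; rewrite agg_out.
Qed.

Lemma gnn_h_bf_params :
  (forall u v, adj u v -> 0 <= w u v) -> (forall v, 0 <= x v) ->
  forall l v, gnn_h L m d bf_params adj w x l v 0%N = iter (minn l K) (bellman_ford adj w) x v.
Proof.
move=> w_ge0 x_ge0; elim=> [|l IH] v; first by rewrite min0n.
have iter_ge0 k u := iter_bellman_ford_ge0 w_ge0 k u x_ge0.
rewrite gnn_h_bf_params_succ; case: ltnP => [l_lt_K | K_le_l].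
  rewrite (minn_idPl l_lt_K) iterS.
  apply: eq_nbhd_min => [|u adj_uv]; rewrite IH (minn_idPl (ltnW l_lt_K)) relu_id //.
    by rewrite addr_ge0 // (ewt_ge0 w_ge0) ?eqxx.
  by rewrite addr_ge0 // (ewt_ge0 w_ge0) // adj_uv orbT.
by rewrite IH relu_id // (minn_idPr K_le_l) (minn_idPr (leqW K_le_l)).
Qed.

End BellmanFordGNN.

Theorem mainTheorem5 (R : realType) (beta : R) (L K m d : nat) :
  0 < beta -> (0 < K)%N -> (K <= L)%N -> (1 <= m)%N -> (1 <= d)%N ->
  exists th : gnn_params R,
    gnn_nnz L m d th = (m * L + m * K + K)%N /\
    gnn_biases_zero th /\
    forall (V : finType) (adj : rel V) (w : V -> V -> R) (x : V -> R),
      attributed_graph adj w x ->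
      total_edge_weight adj w < beta ->
      forall v : V,
        gnn_h L m d th adj w x L v 0%N = iter K (bellman_ford adj w) x v.
Proof.
move=> _ _ K_le_L m_gt0 d_gt0; exists (bf_params R L K d).
split; first exact: gnn_nnz_bf_params.
split; first by split.
move=> V adj w x [_ [_ [_ [w_ge0 x_ge0]]]] _ v.
by rewrite gnn_h_bf_params // (minn_idPr K_le_L).
Qed.
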